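(* Let $\xi\in\mathbb{D}=\{z\in\mathbb{C}:|z|<1\}$ with $\xi\neq 0$, and let $z\in\mathbb{D}\setminus\{\xi\}$. Put $b(z,\xi)=\dfrac{\bar\xi(\xi-z)}{1-z\bar\xi}$ and $A(z,\xi)=\dfrac{1-|\xi|^2}{1-z\bar\xi}$. Then $$|\arg b(z,\xi)|\le \pi\min\bigl\{|A(z,\xi)|,\,1\bigr\}.$$
   Context: Here $\arg w$ denotes the value of the argument of $w\neq 0$ lying in $[-\pi,\pi)$ (so it is the principal argument, except that on the negative real axis the value $-\pi$ is taken). *)

From Stdlib Require Import Reals.
From Coquelicot Require Export Coquelicot.
Open Scope R_scope.

(* Argument of w <> 0 with values in [-PI, PI): the principal argument,
   except that on the negative real axis the value -PI is taken.
   For Im w > 0: acos (Re w / |w|) in (0, PI);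
   for Im w <= 0: - acos (Re w / |w|) in [-PI, 0]  (= -PI iff w is negative real). *)
Definition carg (w : C) : R :=
  if Rlt_dec 0 (Im w) then acos (Re w / Cmod w) else - acos (Re w / Cmod w).

Definition bfun (z xi : C) : C := (Cconj xi * (xi - z) / (1 - z * Cconj xi))%C.
Definition Afun (z xi : C) : C := ((1 - (Cmod xi)^2) / (1 - z * Cconj xi))%C.

(* Since 1 - xi conj(xi) = (1 - z conj(xi)) - conj(xi)(xi - z), we have b = 1 - A.
   The bound PI is trivial, so assume |A| < 1. Then Re (1 - A) > 0, so the angle
   t = |arg (1 - A)| lies in [0, PI/2] and sin t = |Im A| / |1 - A| <= |A|, because
   Im A = Im (A conj(1 - A)). On [0, PI/2] one has t <= PI sin t. *)

From Stdlib Require Import Reals.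
From Coquelicot Require Import Coquelicot.
From Stdlib Require Import Lra Psatz.
Open Scope R_scope.

(* A crude form of Jordan's inequality, from the Taylor bound t - t^3/6 <= sin t. *)
Lemma le_PI_mul_sin t : 0 <= t <= PI / 2 -> t <= PI * sin t.
Proof.
  intros [t_ge0 t_le].
  assert (PI_le4 : PI <= 4) by exact PI_4.
  assert (PI_gt3 : 3 / 2 < PI / 2) by exact PI2_3_2.
  assert (taylor : t - t ^ 3 / 6 <= sin t).
  { replace (t - t ^ 3 / 6) with (sin_approx t 1)
      by (unfold sin_approx, sin_term; simpl; field).
    apply (sin_bound t 0); lra. }
  assert (t2_le : t ^ 2 <= (PI / 2) ^ 2) by nra.
  assert (0 <= t * (PI - PI * t ^ 2 / 6 - 1)) by (apply Rmult_le_pos; nra).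
  nra.
Qed.

Lemma acos_le_PI2 u : 0 <= u <= 1 -> acos u <= PI / 2.
Proof.
  intros Hu.
  assert (PI_pos := PI_RGT_0).
  apply cos_decr_0; try lra; try apply acos_bound.
  rewrite cos_PI2, cos_acos; lra.
Qed.

Lemma Rabs_Im_le_Cmod (c : C) : Rabs (Im c) <= Cmod c.
Proof.
  destruct c as [p q]; unfold Cmod; simpl.
  rewrite <- sqrt_Rsqr_abs.
  apply sqrt_le_1_alt; unfold Rsqr; nra.
Qed.

Lemma Rabs_Im_le_Cmod_mul_1_sub (w : C) : Rabs (Im w) <= Cmod w * Cmod (1 - w)%C.
Proof.
  replace (Im w) with (Im (w * Cconj (1 - w)))
    by (destruct w as [p q]; simpl; ring).
  rewrite <- (Cmod_conj (1 - w)), <- Cmod_mult.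
  apply Rabs_Im_le_Cmod.
Qed.

Lemma Rabs_carg (w : C) : Rabs (carg w) = acos (Re w / Cmod w).
Proof.
  assert (bnd := acos_bound (Re w / Cmod w)).
  unfold carg; destruct (Rlt_dec 0 (Im w)).
  - apply Rabs_pos_eq; lra.
  - rewrite Rabs_Ropp; apply Rabs_pos_eq; lra.
Qed.

Lemma Rabs_carg_le_PI (w : C) : Rabs (carg w) <= PI.
Proof. rewrite Rabs_carg; apply acos_bound. Qed.

Lemma sin_Rabs_carg (w : C) :
  w <> 0%C -> sin (Rabs (carg w)) = Rabs (Im w) / Cmod w.
Proof.
  intros w_neq0.
  assert (m_pos : 0 < Cmod w) by (apply Cmod_gt_0; exact w_neq0).
  assert (m_neq0 : Cmod w <> 0) by (apply Rgt_not_eq; exact m_pos).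
  assert (pyth := Cmod2_alt w).
  assert (re_le := re_le_Cmod w).
  rewrite Rabs_carg, sin_acos.
  - replace (1 - (Re w / Cmod w)²) with ((Im w / Cmod w)²)
      by (unfold Rsqr; field_simplify; [f_equal; lra | exact m_neq0 ..]).
    rewrite sqrt_Rsqr_abs, Rabs_div, (Rabs_pos_eq (Cmod w)); lra.
  - apply Rabs_le_between.
    rewrite Rabs_div, (Rabs_pos_eq (Cmod w)) by lra.
    apply (Rdiv_le_1 _ _ m_pos); exact re_le.
Qed.

Lemma Rabs_carg_1_sub (w : C) : Cmod w < 1 -> Rabs (carg (1 - w)%C) <= PI * Cmod w.
Proof.
  intros w_lt1.
  assert (re_pos : 0 < Re (1 - w)).
  { replace (Re (1 - w)) with (1 - Re w) by (destruct w; simpl; ring).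
    assert (re_le := re_le_Cmod w); apply Rabs_le_between in re_le; lra. }
  assert (v_pos : 0 < Cmod (1 - w)).
  { apply Cmod_gt_0; intro E; rewrite E in re_pos; apply (Rlt_irrefl 0), re_pos. }
  assert (t_ge0 := Rabs_pos (carg (1 - w))).
  assert (t_le : Rabs (carg (1 - w)) <= PI / 2).
  { rewrite Rabs_carg; apply acos_le_PI2; split.
    - apply Rdiv_le_0_compat; lra.
    - apply (Rdiv_le_1 _ _ v_pos).
      apply (Rle_trans _ _ _ (Rle_abs _)), re_le_Cmod. }
  assert (sin_le : sin (Rabs (carg (1 - w))) <= Cmod w).
  { rewrite sin_Rabs_carg by (apply Cmod_gt_0; lra).
    replace (Im (1 - w)) with (- Im w) by (destruct w; simpl; ring).
    rewrite Rabs_Ropp.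
    apply (Rle_div_l _ _ _ v_pos), Rabs_Im_le_Cmod_mul_1_sub. }
  assert (PI_pos := PI_RGT_0).
  apply (Rle_trans _ _ _ (le_PI_mul_sin _ (conj t_ge0 t_le))).
  apply Rmult_le_compat_l; lra.
Qed.

Lemma one_sub_mul_conj_neq0 (z xi : C) :
  Cmod z < 1 -> Cmod xi < 1 -> (1 - z * Cconj xi)%C <> 0%C.
Proof.
  intros z_lt1 xi_lt1 E.
  assert (prod_eq1 : (z * Cconj xi)%C = 1%C).
  { replace (z * Cconj xi)%C with (1 - (1 - z * Cconj xi))%C by ring.
    rewrite E; ring. }
  assert (mod_eq1 := f_equal Cmod prod_eq1).
  rewrite Cmod_mult, Cmod_conj, Cmod_1 in mod_eq1.
  assert (0 <= Cmod z) by apply Cmod_ge_0.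
  nra.
Qed.

Lemma bfun_eq_1_sub_Afun (z xi : C) :
  (1 - z * Cconj xi)%C <> 0%C -> bfun z xi = (1 - Afun z xi)%C.
Proof.
  intros den_neq0; unfold bfun, Afun.
  replace (Cpow (RtoC (Cmod xi)) 2) with (xi * Cconj xi)%C
    by (rewrite <- Cmod2_conj; simpl; rewrite !RtoC_mult; ring).
  field; exact den_neq0.
Qed.

Theorem lemma1 (xi z : C) :
  Cmod xi < 1 -> xi <> 0%C -> Cmod z < 1 -> z <> xi ->
  Rabs (carg (bfun z xi)) <= PI * Rmin (Cmod (Afun z xi)) 1.
Proof.
  intros xi_lt1 _ z_lt1 _.
  rewrite bfun_eq_1_sub_Afun by (apply one_sub_mul_conj_neq0; assumption).
  destruct (Rlt_dec (Cmod (Afun z xi)) 1) as [A_lt1 | A_ge1].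
  - rewrite Rmin_left by lra; apply Rabs_carg_1_sub; exact A_lt1.
  - rewrite Rmin_right, Rmult_1_r by lra; apply Rabs_carg_le_PI.
Qed.
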